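(* Let $\mathbb G=V_1\times V_2$ be a step-two Carnot group with $\mathcal A_h(\mathbb G)=\mathcal A(V_1\times V_2)$. Then $\mathcal A_h(\mathbb G')=\mathcal A(V_1'\times V_2')$ for every step-two Carnot group $\mathbb G'=V_1'\times V_2'$ that is a proper quotient of $\mathbb G$.
   Context: A step-two Carnot group is $\mathbb G=V_1\times V_2$ ($V_1,V_2$ finite-dimensional real vector spaces, $V_2\ne\{0\}$) with a bilinear skew-symmetric $[\cdot,\cdot]:V_1\times V_1\to V_2$ whose image spans $V_2$, and group law $(x,z)\cdot(x',z')=(x+x',z+z'+[x,x'])$. $\mathcal A_h(\mathbb G)$ is the space of maps $f:\mathbb G\to\mathbb R$ such that for all $(x,z)\in\mathbb G$, $y\in V_1$, $t\mapsto f((x,z)\cdot(ty,0))$ is affine; $\mathcal A(W)$ is the space of maps affine in the usual sense on a vector space $W$. A Carnot morphism $\pi:\mathbb G\to\mathbb G'$ is $\pi(x,z)=(\pi_1(x),\pi_2(z))$ with $\pi_1:V_1\to V_1'$, $\pi_2:V_2\to V_2'$ linear and $\pi_2([x,y])=[\pi_1(x),\pi_1(y)]'$. $\mathbb G'$ is a proper quotient of $\mathbb G$ if there is a surjective Carnot morphism $\pi:\mathbb G\to\mathbb G'$ with $\ker\pi\ne\{(0,0)\}$. *)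

(* V1 = 'rV[R]_n, V2 = 'rV[R]_m with R : realType. *)
From HB Require Import structures.
From mathcomp Require Import all_boot all_order all_algebra.
From mathcomp Require Import reals.
Set Implicit Arguments. Unset Strict Implicit. Unset Printing Implicit Defensive.
Import Order.TTheory GRing.Theory Num.Theory.
Local Open Scope ring_scope.

Section Carnot.
Variable R : realType.

Definition bracket (n m : nat) := 'rV[R]_n -> 'rV[R]_n -> 'rV[R]_m.

Definition is_step2_carnot (n m : nat) (br : bracket n m) : Prop :=
  [/\ (0 < m)%N,
      (forall (a : R) x y z, br (a *: x + y) z = a *: br x z + br y z),
      (forall (a : R) x y z, br x (a *: y + z) = a *: br x y + br x z),
      (forall x y, br x y = - br y x) &
      (forall v : 'rV[R]_m, exists (k : nat) (c : 'I_k -> R)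
          (xs ys : 'I_k -> 'rV[R]_n),
          v = \sum_(i < k) c i *: br (xs i) (ys i))].

Definition gmul (n m : nat) (br : bracket n m)
    (p q : 'rV[R]_n * 'rV[R]_m) : 'rV[R]_n * 'rV[R]_m :=
  (p.1 + q.1, p.2 + q.2 + br p.1 q.1).

Definition affine_line (g : R -> R) : Prop :=
  exists a b : R, forall t, g t = a * t + b.

Definition horiz_affine (n m : nat) (br : bracket n m)
    (f : 'rV[R]_n * 'rV[R]_m -> R) : Prop :=
  forall (p : 'rV[R]_n * 'rV[R]_m) (y : 'rV[R]_n),
    affine_line (fun t => f (gmul br p (t *: y, 0))).

Definition affine_map (n m : nat) (f : 'rV[R]_n * 'rV[R]_m -> R) : Prop :=
  forall (p q : 'rV[R]_n * 'rV[R]_m) (t : R),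
    f (t *: p.1 + (1 - t) *: q.1, t *: p.2 + (1 - t) *: q.2)
    = t * f p + (1 - t) * f q.

(* Carnot morphism pi(x,z) = (pi1 x, pi2 z), pi1, pi2 linear
   (represented by matrices), pi2 [x,y] = [pi1 x, pi1 y]'. *)
Definition carnot_morphism (n m n' m' : nat) (br : bracket n m)
    (br' : bracket n' m') (A : 'M[R]_(n, n')) (B : 'M[R]_(m, m')) : Prop :=
  forall x y, br x y *m B = br' (x *m A) (y *m A).

Definition proper_quotient (n m n' m' : nat) (br : bracket n m)
    (br' : bracket n' m') : Prop :=
  exists (A : 'M[R]_(n, n')) (B : 'M[R]_(m, m')),
    [/\ carnot_morphism br br' A B,
        (forall (x' : 'rV[R]_n') (z' : 'rV[R]_m'),
           exists x z, x *m A = x' /\ z *m B = z') &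
        (exists (x : 'rV[R]_n) (z : 'rV[R]_m), (x, z) <> (0, 0) /\ x *m A = 0 /\ z *m B = 0)].

End Carnot.

(* Horizontally affine maps on the quotient pull back, through the surjective
   morphism pi, to horizontally affine maps on G, which are affine by hypothesis;
   since pi is linear and onto, the original map on G' is then affine.  The
   converse inclusion holds in every step-two group: along a horizontal line
   t |-> (x + t y, z + [x, t y]) both coordinates are affine in t. *)
From HB Require Import structures.
From mathcomp Require Import all_boot all_order all_algebra.
From mathcomp Require Import reals.
From mathcomp Require Import ring.
Set Implicit Arguments.
Unset Strict Implicit.
Local Open Scope ring_scope.
Import GRing.Theory.

Section HorizontalLines.
Variables (R : realType) (n m : nat) (br : bracket R n m).
Hypothesis br_linear_r :
  forall (a : R) x y z, br x (a *: y + z) = a *: br x y + br x z.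

Lemma bracket0r x : br x 0 = 0.
Proof.
apply: (@addrI _ (br x 0)); rewrite addr0.
by have := br_linear_r 1 x 0 0; rewrite !scale1r addr0.
Qed.

Lemma gmul_horizontal_line (p : 'rV[R]_n * 'rV[R]_m) y t :
  gmul br p (t *: y, 0) =
  (t *: (p.1 + y) + (1 - t) *: p.1, t *: (p.2 + br p.1 y) + (1 - t) *: p.2).
Proof.
have combK (V : lmodType R) (u v : V) : t *: (u + v) + (1 - t) *: u = u + t *: v.
  by rewrite scalerDr scalerBl scale1r addrC addrA subrK addrC.
rewrite /gmul /= !combK addr0.
by have := br_linear_r t p.1 y 0; rewrite addr0 bracket0r addr0 => ->.
Qed.

Lemma affine_map_horiz_affine (f : 'rV[R]_n * 'rV[R]_m -> R) :
  affine_map f -> horiz_affine br f.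
Proof.
move=> f_aff p y; set q := (p.1 + y, p.2 + br p.1 y).
exists (f q - f p), (f p) => t.
by rewrite gmul_horizontal_line (f_aff q p); ring.
Qed.

End HorizontalLines.

Section Pullback.
Variables (R : realType) (n m n' m' : nat).
Variables (A : 'M[R]_(n, n')) (B : 'M[R]_(m, m')).

Definition carnot_map (p : 'rV[R]_n * 'rV[R]_m) : 'rV[R]_n' * 'rV[R]_m' :=
  (p.1 *m A, p.2 *m B).

Lemma horiz_affine_comp (br : bracket R n m) (br' : bracket R n' m')
    (f' : 'rV[R]_n' * 'rV[R]_m' -> R) :
  carnot_morphism br br' A B -> horiz_affine br' f' ->
  horiz_affine br (f' \o carnot_map).
Proof.
move=> morph f'_haff p y.
have [a [b f'_line]] := f'_haff (carnot_map p) (y *m A).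
exists a, b => t; rewrite -f'_line /= /carnot_map /gmul /=.
by rewrite !mulmxDl morph -!scalemxAl mul0mx.
Qed.

Lemma affine_map_of_comp (f' : 'rV[R]_n' * 'rV[R]_m' -> R) :
  (forall x' z', exists (x : 'rV[R]_n) (z : 'rV[R]_m),
     x *m A = x' /\ z *m B = z') ->
  affine_map (f' \o carnot_map) -> affine_map f'.
Proof.
move=> onto f_aff [x1' z1'] [x2' z2'] t.
have [x1 [z1 [<- <-]]] := onto x1' z1'.
have [x2 [z2 [<- <-]]] := onto x2' z2'.
by have := f_aff (x1, z1) (x2, z2) t; rewrite /= /carnot_map /= !mulmxDl -!scalemxAl.
Qed.

End Pullback.

Theorem proposition6p5 (R : realType) (n m : nat) (br : bracket R n m) :
  is_step2_carnot br ->
  (forall f : 'rV[R]_n * 'rV[R]_m -> R, horiz_affine br f <-> affine_map f) ->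
  forall (n' m' : nat) (br' : bracket R n' m'),
    is_step2_carnot br' ->
    proper_quotient br br' ->
    forall f' : 'rV[R]_n' * 'rV[R]_m' -> R,
      horiz_affine br' f' <-> affine_map f'.
Proof.
move=> _ hG n' m' br' [_ _ br'_linear_r _ _] [A [B [morph onto _]]] f'.
split; last exact: affine_map_horiz_affine.
move=> f'_haff; apply: (affine_map_of_comp onto).
by apply/hG; apply: horiz_affine_comp morph f'_haff.
Qed.
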